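(* Let $L\ge2$, let $\ell$ be continuously differentiable, and let $W(t)$, $t\ge0$, be a gradient flow trajectory. Then for all $t\ge0$: (i) for every $1\le k\le L$, $\|W_k(t)\|_F^2-\|W_k(t)\|_2^2\le D$; (ii) for every $1\le k<L$ with $W_{k+1}(t)\ne0$, $$\langle v_{k+1}(t),u_k(t)\rangle^2\ \ge\ 1-\frac{D+\|W_{k+1}(0)\|_2^2+\|W_k(0)\|_2^2}{\|W_{k+1}(t)\|_2^2};$$ (iii) if $\max_{1\le k\le L}\|W_k(t)\|_F\to\infty$ as $t\to\infty$, then $\left|\left\langle \frac{w_{\mathrm{prod}}(t)}{\prod_{k=1}^L\|W_k(t)\|_F},v_1(t)\right\rangle\right|\to1$.
   Context: A depth-$L$ linear network is $W=(W_L,\dots,W_1)$ with $W_k\in\mathbb{R}^{d_k\times d_{k-1}}$, $d_0=d$, $d_L=1$, and $w_{\mathrm{prod}}:=(W_L\cdots W_1)^\top\in\mathbb{R}^d$. Given vectors $z_1,\dots,z_n\in\mathbb{R}^d$ (with $z_i=y_ix_i$, $\|x_i\|\le1$, $y_i\in\{\pm1\}$), the risk is $\mathcal{R}(W)=\frac1n\sum_{i=1}^n\ell(\langle w_{\mathrm{prod}},z_i\rangle)$. Gradient flow: a $C^1$ curve $W(t)$, $t\in[0,\infty)$, with $\frac{d}{dt}W(t)=-\nabla\mathcal{R}(W(t))$. $\|\cdot\|_F$ is the Frobenius norm and $\|\cdot\|_2$ the spectral norm. The constant $D$ depends only on the initialization: $$D:=\Big(\max_{1\le k\le L}\|W_k(0)\|_F^2\Big)-\|W_L(0)\|_F^2+\sum_{k=1}^{L-1}\big\|W_k(0)W_k(0)^\top-W_{k+1}(0)^\top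 W_{k+1}(0)\big\|_2.$$ For each $k$ and time $t$, $u_k(t),v_k(t)$ are a pair of first (top) left and right unit singular vectors of $W_k(t)$. *)

From Stdlib Require Import Reals Lra Lia Arith ClassicalEpsilon.
Open Scope R_scope.

(* Matrices are functions row -> col -> R, with dimensions carried separately;
   only entries with in-range indices are ever used. Vectors: nat -> R. *)

Fixpoint sumR (n : nat) (f : nat -> R) : R :=
  match n with O => 0 | S m => sumR m f + f m end.

Fixpoint prodR1 (L : nat) (f : nat -> R) : R :=
  match L with O => 1 | S m => prodR1 m f * f (S m) end.

(* max_{k = 1}^{L} f k (with base 0; used only for nonnegative f) *)
Fixpoint maxR1 (L : nat) (f : nat -> R) : R :=
  match L with O => 0 | S m => Rmax (maxR1 m f) (f (S m)) end.

Definition dot (n : nat) (x y : nat -> R) : R := sumR n (fun i => x i * y i).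
Definition vnorm (n : nat) (x : nat -> R) : R := sqrt (dot n x x).

Definition matvec (m n : nat) (A : nat -> nat -> R) (x : nat -> R) : nat -> R :=
  fun i => sumR n (fun j => A i j * x j).
Definition trmx (A : nat -> nat -> R) : nat -> nat -> R := fun i j => A j i.
Definition matmul (p : nat) (A B : nat -> nat -> R) : nat -> nat -> R :=
  fun i j => sumR p (fun q => A i q * B q j).
Definition matsub (A B : nat -> nat -> R) : nat -> nat -> R :=
  fun i j => A i j - B i j.

Definition frob2 (m n : nat) (A : nat -> nat -> R) : R :=
  sumR m (fun i => sumR n (fun j => (A i j) ^ 2)).
Definition frob (m n : nat) (A : nat -> nat -> R) : R := sqrt (frob2 m n A).

Definition spec_set (m n : nat) (A : nat -> nat -> R) (r : R) : Prop :=
  exists x : nat -> R, vnorm n x <= 1 /\ r = vnorm m (matvec m n A x).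
Definition spec (m n : nat) (A : nat -> nat -> R) : R :=
  epsilon (inhabits 0) (fun s => is_lub (spec_set m n A) s).

Definition top_sing_pair (m n : nat) (A : nat -> nat -> R) (u v : nat -> R) : Prop :=
  vnorm m u = 1 /\ vnorm n v = 1 /\
  (forall i, (i < m)%nat -> matvec m n A v i = spec m n A * u i) /\
  (forall j, (j < n)%nat -> matvec n m (trmx A) u j = spec m n A * v j).

(* A network: layer k (1 <= k <= L) is W k, a (dims k) x (dims (k-1)) matrix;
   dims 0 = d, dims L = 1. *)
Definition net := nat -> nat -> nat -> R.

Fixpoint prodmat (dims : nat -> nat) (W : net) (k : nat) : nat -> nat -> R :=
  match k with
  | O => fun i j => if Nat.eqb i j then 1 else 0
  | S k' => matmul (dims k') (W (S k')) (prodmat dims W k')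
  end.

(* w_prod = (W_L ... W_1)^T in R^d (dims L = 1) *)
Definition wprod (dims : nat -> nat) (L : nat) (W : net) : nat -> R :=
  fun j => prodmat dims W L 0%nat j.

Definition risk (dims : nat -> nat) (L n : nat) (ell : R -> R)
    (z : nat -> nat -> R) (W : net) : R :=
  / INR n * sumR n (fun i => ell (dot (dims O) (wprod dims L W) (z i))).

Definition upd (W : net) (k i j : nat) (x : R) : net :=
  fun k' i' j' =>
    if (Nat.eqb k' k && Nat.eqb i' i && Nat.eqb j' j)%bool then x else W k' i' j'.

Definition is_gradient_flow (dims : nat -> nat) (L n : nat) (ell : R -> R)
    (z : nat -> nat -> R) (Wt : R -> net) : Prop :=
  (forall t, 0 < t -> forall k i j, (1 <= k <= L)%nat -> (i < dims k)%nat ->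
     (j < dims (k - 1)%nat)%nat ->
     exists g : R,
       derivable_pt_lim (fun x => risk dims L n ell z (upd (Wt t) k i j x))
                        (Wt t k i j) g /\
       derivable_pt_lim (fun s => Wt s k i j) t (- g)) /\
  (forall k i j, (1 <= k <= L)%nat -> (i < dims k)%nat ->
     (j < dims (k - 1)%nat)%nat ->
     forall eps, 0 < eps -> exists delta, 0 < delta /\
       forall t, 0 <= t < delta -> Rabs (Wt t k i j - Wt 0 k i j) < eps).

Definition D_init (dims : nat -> nat) (L : nat) (W0 : net) : R :=
  maxR1 L (fun k => frob2 (dims k) (dims (k - 1)%nat) (W0 k))
  - frob2 (dims L) (dims (L - 1)%nat) (W0 L)
  + sumR (L - 1) (fun k0 => let k := S k0 in
      spec (dims k) (dims k)
        (matsub (matmul (dims (k - 1)%nat) (W0 k) (trmx (W0 k)))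
                (matmul (dims (S k)) (trmx (W0 (S k))) (W0 (S k))))).

Definition tends_to_infty (f : R -> R) : Prop :=
  forall M, exists T, forall t, T <= t -> M <= f t.
Definition tends_to (f : R -> R) (l : R) : Prop :=
  forall eps, 0 < eps -> exists T, forall t, T <= t -> Rabs (f t - l) < eps.

(* Along gradient flow the matrices W_k W_k^T - W_(k+1)^T W_(k+1) are conserved: their time
   derivatives are the same expression in the upper and lower partial products.  Testing this on
   unit vectors shows that the squared spectral norms of consecutive layers differ by at most
   the initial imbalance, and that all squared Frobenius norms stay at bounded distance from that
   of the last layer, which is a row, hence has equal spectral and Frobenius norms; this is (i).
   For (ii), ||W_(k+1) v_(k+1)||^2 is, up to initial terms, ||W_k^T v_(k+1)||^2, and W_k^T acts
   with its top singular value only along u_k and with at most D outside of it.  For (iii), the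
   image of v_1 under W_k ... W_1 gains at each layer a factor at least the squared Frobenius
   norm minus a constant, while the product of the Frobenius norms bounds it from above; when
   the norms diverge, Bernoulli's inequality forces the ratio to 1. *)

From Stdlib Require Import Reals Lra Lia Arith ClassicalEpsilon.
Open Scope R_scope.

Lemma sumR_ext n f g : (forall i, (i < n)%nat -> f i = g i) -> sumR n f = sumR n g.
Proof.
  induction n; simpl; intros H; auto.
  rewrite IHn by (intros; apply H; lia). rewrite H by lia. reflexivity.
Qed.

Lemma sumR_plus n f g : sumR n (fun i => f i + g i) = sumR n f + sumR n g.
Proof. induction n; simpl; [lra | rewrite IHn; lra]. Qed.

Lemma sumR_minus n f g : sumR n (fun i => f i - g i) = sumR n f - sumR n g.
Proof. induction n; simpl; [lra | rewrite IHn; lra]. Qed.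

Lemma sumR_scal n c f : sumR n (fun i => c * f i) = c * sumR n f.
Proof. induction n; simpl; [lra | rewrite IHn; lra]. Qed.

Lemma sumR_scalr n c f : sumR n (fun i => f i * c) = sumR n f * c.
Proof. induction n; simpl; [lra | rewrite IHn; lra]. Qed.

Lemma sumR_zero n : sumR n (fun _ => 0) = 0.
Proof. induction n; simpl; lra. Qed.

Lemma sumR_swap n m (f : nat -> nat -> R) :
  sumR n (fun i => sumR m (fun j => f i j)) = sumR m (fun j => sumR n (fun i => f i j)).
Proof.
  induction n; simpl; [now rewrite sumR_zero |].
  rewrite IHn, <- sumR_plus. reflexivity.
Qed.

Lemma sumR_nonneg n f : (forall i, (i < n)%nat -> 0 <= f i) -> 0 <= sumR n f.
Proof.
  induction n; simpl; intros H; [lra |].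
  assert (0 <= f n) by (apply H; lia).
  assert (0 <= sumR n f) by (apply IHn; intros; apply H; lia). lra.
Qed.

Lemma sumR_le n f g : (forall i, (i < n)%nat -> f i <= g i) -> sumR n f <= sumR n g.
Proof.
  induction n; simpl; intros H; [lra |].
  assert (f n <= g n) by (apply H; lia).
  assert (sumR n f <= sumR n g) by (apply IHn; intros; apply H; lia). lra.
Qed.

Lemma sumR_le_n m n f : (m <= n)%nat -> (forall i, 0 <= f i) -> sumR m f <= sumR n f.
Proof. intros H Hf. induction H; [lra |]. simpl. pose proof (Hf m0). lra. Qed.

Lemma sumR_term_le n f a : (a < n)%nat -> (forall i, (i < n)%nat -> 0 <= f i) ->
  f a <= sumR n f.
Proof.
  induction n; intros Ha H; [lia |]. simpl.
  destruct (Nat.eq_dec a n) as [-> |].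
  - pose proof (sumR_nonneg n f ltac:(intros; apply H; lia)). lra.
  - assert (f a <= sumR n f) by (apply IHn; [lia | intros; apply H; lia]).
    assert (0 <= f n) by (apply H; lia). lra.
Qed.

Lemma sumR_delta n a f : (a < n)%nat ->
  sumR n (fun i => (if Nat.eqb i a then 1 else 0) * f i) = f a.
Proof.
  induction n; intros Ha; [lia |]. simpl.
  destruct (Nat.eq_dec a n) as [-> | Hne].
  - rewrite Nat.eqb_refl, (sumR_ext n _ (fun _ => 0)), sumR_zero; [lra |].
    intros i Hi. destruct (Nat.eqb_spec i n); [lia | lra].
  - rewrite IHn by lia. destruct (Nat.eqb_spec n a); [lia | lra].
Qed.

Lemma sumR_delta_r n a f : (a < n)%nat ->
  sumR n (fun i => f i * (if Nat.eqb i a then 1 else 0)) = f a.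
Proof. intros. rewrite <- (sumR_delta n a f) by auto. apply sumR_ext; intros; lra. Qed.

Lemma sumR_Cauchy_Schwarz n x y :
  (sumR n (fun i => x i * y i)) ^ 2 <=
  sumR n (fun i => x i * x i) * sumR n (fun i => y i * y i).
Proof.
  induction n; simpl; [lra |].
  set (C := sumR n (fun i => x i * y i)) in *.
  set (A := sumR n (fun i => x i * x i)) in *.
  set (B := sumR n (fun i => y i * y i)) in *.
  (* Lagrange's identity: the new cross terms form a sum of squares *)
  assert (Hsq : sumR n (fun i => (x n * y i - y n * x i) ^ 2) =
                x n ^ 2 * B + y n ^ 2 * A - 2 * x n * y n * C).
  { unfold A, B, C. rewrite <- !sumR_scal, <- sumR_plus, <- sumR_minus.
    apply sumR_ext; intros; ring. }
  pose proof (sumR_nonneg n (fun i => (x n * y i - y n * x i) ^ 2)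
                ltac:(intros; apply pow2_ge_0)).
  nra.
Qed.

Definition sqnorm n x := dot n x x.

Lemma sqnorm_nonneg n x : 0 <= sqnorm n x.
Proof. apply sumR_nonneg. intros; nra. Qed.

Lemma vnorm_sq n x : vnorm n x ^ 2 = sqnorm n x.
Proof. unfold vnorm. rewrite pow2_sqrt; [reflexivity | apply sqnorm_nonneg]. Qed.

Lemma sqnorm_of_vnorm1 n x : vnorm n x = 1 -> sqnorm n x = 1.
Proof. intros H. rewrite <- vnorm_sq, H. ring. Qed.

Lemma dot_sym n x y : dot n x y = dot n y x.
Proof. apply sumR_ext; intros; ring. Qed.

Lemma dot_ext n x x' y y' : (forall i, (i < n)%nat -> x i = x' i) ->
  (forall i, (i < n)%nat -> y i = y' i) -> dot n x y = dot n x' y'.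
Proof. intros H1 H2. apply sumR_ext; intros. rewrite H1, H2; auto. Qed.

Lemma sqnorm_ext n x x' : (forall i, (i < n)%nat -> x i = x' i) -> sqnorm n x = sqnorm n x'.
Proof. intros; apply dot_ext; auto. Qed.

Lemma dot_Cauchy_Schwarz n x y : (dot n x y) ^ 2 <= sqnorm n x * sqnorm n y.
Proof. apply sumR_Cauchy_Schwarz. Qed.

Lemma dot_scal_l n c x y : dot n (fun i => c * x i) y = c * dot n x y.
Proof. unfold dot. rewrite <- sumR_scal. apply sumR_ext; intros; ring. Qed.

Lemma sqnorm_scal n c x : sqnorm n (fun i => c * x i) = c ^ 2 * sqnorm n x.
Proof. unfold sqnorm, dot. rewrite <- sumR_scal. apply sumR_ext; intros; ring. Qed.

Lemma sqnorm_plus n x y :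
  sqnorm n (fun i => x i + y i) = sqnorm n x + 2 * dot n x y + sqnorm n y.
Proof. unfold sqnorm, dot. rewrite <- sumR_scal, <- !sumR_plus. apply sumR_ext; intros; ring. Qed.

Lemma matvec_ext m n A x y i : (forall j, (j < n)%nat -> x j = y j) ->
  matvec m n A x i = matvec m n A y i.
Proof. intros H. apply sumR_ext; intros. rewrite H; auto. Qed.

Lemma matvec_scal m n A c x i : matvec m n A (fun j => c * x j) i = c * matvec m n A x i.
Proof. unfold matvec. rewrite <- sumR_scal. apply sumR_ext; intros; ring. Qed.

Lemma matvec_plus m n A x y i :
  matvec m n A (fun j => x j + y j) i = matvec m n A x i + matvec m n A y i.
Proof. unfold matvec. rewrite <- sumR_plus. apply sumR_ext; intros; ring. Qed.

Lemma dot_matvec_trmx m n A u y :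
  dot m u (matvec m n A y) = dot n (matvec n m (trmx A) u) y.
Proof.
  unfold dot, matvec, trmx.
  transitivity (sumR m (fun i => sumR n (fun j => u i * A i j * y j))).
  { apply sumR_ext; intros. rewrite <- sumR_scal. apply sumR_ext; intros; ring. }
  rewrite sumR_swap. apply sumR_ext; intros. rewrite <- sumR_scalr. apply sumR_ext; intros; ring.
Qed.

Lemma frob2_nonneg m n A : 0 <= frob2 m n A.
Proof. apply sumR_nonneg; intros. apply sumR_nonneg; intros. apply pow2_ge_0. Qed.

Lemma frob2_trmx m n A : frob2 n m (trmx A) = frob2 m n A.
Proof. unfold frob2, trmx. rewrite sumR_swap. reflexivity. Qed.

Lemma sqnorm_matvec_le_frob2 m n A x :
  sqnorm m (matvec m n A x) <= frob2 m n A * sqnorm n x.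
Proof.
  unfold sqnorm, dot at 1, frob2. rewrite <- sumR_scalr. apply sumR_le. intros i Hi.
  unfold matvec. pose proof (sumR_Cauchy_Schwarz n (A i) x).
  replace (sumR n (fun j => A i j ^ 2)) with (sumR n (fun j => A i j * A i j))
    by (apply sumR_ext; intros; ring).
  unfold dot. nra.
Qed.

Lemma sqnorm_trmx_le_frob2 m n A u :
  sqnorm n (matvec n m (trmx A) u) <= frob2 m n A * sqnorm m u.
Proof. rewrite <- frob2_trmx. apply sqnorm_matvec_le_frob2. Qed.

(** * The spectral norm *)

Lemma spec_set_le_frob m n A r : spec_set m n A r -> r <= sqrt (frob2 m n A).
Proof.
  intros [x [Hx ->]]. apply sqrt_le_1_alt.
  pose proof (sqnorm_matvec_le_frob2 m n A x). pose proof (frob2_nonneg m n A).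
  pose proof (vnorm_sq n x). pose proof (sqrt_pos (dot n x x)).
  fold (sqnorm m (matvec m n A x)). assert (sqnorm n x <= 1) by (unfold vnorm in *; nra).
  nra.
Qed.

Lemma spec_set0 m n A : spec_set m n A 0.
Proof.
  exists (fun _ => 0).
  assert (Z : forall k (f : nat -> R), (forall i, f i = 0) -> sqrt (sumR k f) = 0).
  { intros k f Hf. rewrite (sumR_ext _ _ (fun _ => 0)), sumR_zero, sqrt_0; auto. }
  split.
  - unfold vnorm, dot. rewrite Z by (intros; ring). lra.
  - unfold vnorm, dot. rewrite Z; auto. intros i.
    unfold matvec. rewrite (sumR_ext _ _ (fun _ => 0)), sumR_zero by (intros; ring). ring.
Qed.

Lemma spec_lub m n A : is_lub (spec_set m n A) (spec m n A).
Proof.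
  unfold spec. apply epsilon_spec.
  destruct (completeness (spec_set m n A)) as [s Hs].
  - exists (sqrt (frob2 m n A)). intros r Hr. apply spec_set_le_frob; auto.
  - exists 0. apply spec_set0.
  - exists s; auto.
Qed.

Lemma spec_nonneg m n A : 0 <= spec m n A.
Proof. apply (proj1 (spec_lub m n A)), spec_set0. Qed.

Lemma spec_sq_le_frob2 m n A : spec m n A ^ 2 <= frob2 m n A.
Proof.
  assert (spec m n A <= sqrt (frob2 m n A)).
  { apply (proj2 (spec_lub m n A)). intros r Hr. apply spec_set_le_frob; auto. }
  pose proof (spec_nonneg m n A). pose proof (sqrt_sqrt _ (frob2_nonneg m n A)). nra.
Qed.

Lemma sqnorm_matvec_le_spec m n A x :
  sqnorm m (matvec m n A x) <= spec m n A ^ 2 * sqnorm n x.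
Proof.
  pose proof (sqnorm_nonneg n x) as Hx0.
  destruct (Req_dec (sqnorm n x) 0) as [H0 | H0].
  - pose proof (sqnorm_matvec_le_frob2 m n A x). pose proof (sqnorm_nonneg m (matvec m n A x)).
    rewrite H0 in *. lra.
  - (* apply the definition of the supremum to the normalised vector c x *)
    set (c := / sqrt (sqnorm n x)).
    assert (Hs : 0 < sqrt (sqnorm n x)) by (apply sqrt_lt_R0; lra).
    assert (Hc2 : c ^ 2 * sqnorm n x = 1).
    { unfold c. rewrite <- (sqrt_sqrt (sqnorm n x)) at 2 by lra. field. lra. }
    assert (Hle : vnorm m (matvec m n A (fun j => c * x j)) <= spec m n A).
    { apply (proj1 (spec_lub m n A)). exists (fun j => c * x j). split; auto.
      unfold vnorm. fold (sqnorm n (fun j => c * x j)). rewrite sqnorm_scal, Hc2, sqrt_1. lra. }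
    assert (Hsc : sqnorm m (matvec m n A (fun j => c * x j)) = c ^ 2 * sqnorm m (matvec m n A x)).
    { rewrite <- sqnorm_scal. apply sqnorm_ext. intros; apply matvec_scal. }
    pose proof (vnorm_sq m (matvec m n A (fun j => c * x j))).
    pose proof (sqrt_pos (dot m (matvec m n A (fun j => c * x j)) (matvec m n A (fun j => c * x j)))).
    pose proof (spec_nonneg m n A).
    assert (c ^ 2 * sqnorm m (matvec m n A x) <= spec m n A ^ 2) by (unfold vnorm in *; nra).
    assert (0 < c ^ 2) by (unfold c; apply pow_lt, Rinv_0_lt_compat; auto).
    apply Rmult_le_reg_l with (c ^ 2); auto. nra.
Qed.

Lemma spec_le m n A B : 0 <= B ->
  (forall x, sqnorm n x <= 1 -> sqnorm m (matvec m n A x) <= B ^ 2) -> spec m n A <= B.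
Proof.
  intros HB H. apply (proj2 (spec_lub m n A)).
  intros r [x [Hx ->]]. rewrite <- (sqrt_pow2 B) by auto. apply sqrt_le_1_alt.
  apply H. pose proof (vnorm_sq n x). pose proof (sqrt_pos (dot n x x)). unfold vnorm in *. nra.
Qed.

Lemma sqnorm_trmx_le_spec m n A u :
  sqnorm n (matvec n m (trmx A) u) <= spec m n A ^ 2 * sqnorm m u.
Proof.
  set (y := matvec n m (trmx A) u).
  assert (E : dot m u (matvec m n A y) = sqnorm n y) by (rewrite dot_matvec_trmx; reflexivity).
  pose proof (dot_Cauchy_Schwarz m u (matvec m n A y)) as CS. rewrite E in CS.
  pose proof (sqnorm_matvec_le_spec m n A y). pose proof (sqnorm_nonneg n y).
  pose proof (sqnorm_nonneg m u). pose proof (sqnorm_nonneg m (matvec m n A y)).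
  destruct (Req_dec (sqnorm n y) 0) as [Hy0 | Hy0]; [rewrite Hy0; nra |].
  apply Rmult_le_reg_l with (sqnorm n y); nra.
Qed.

Lemma spec_row n A : spec 1 n A ^ 2 = frob2 1 n A.
Proof.
  apply Rle_antisym; [apply spec_sq_le_frob2 |].
  (* test the row on itself *)
  pose proof (sqnorm_matvec_le_spec 1 n A (A 0%nat)) as H.
  assert (E : frob2 1 n A = sumR n (fun j => A 0%nat j * A 0%nat j)).
  { unfold frob2. simpl. rewrite Rplus_0_l. apply sumR_ext; intros; ring. }
  unfold sqnorm at 1, dot, matvec in H. simpl in H.
  change (sqnorm n (A 0%nat)) with (sumR n (fun j => A 0%nat j * A 0%nat j)) in H.
  rewrite <- E in H. pose proof (frob2_nonneg 1 n A). pose proof (spec_nonneg 1 n A).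
  destruct (Req_dec (frob2 1 n A) 0) as [Z | Z]; [rewrite Z; nra |].
  apply Rmult_le_reg_l with (frob2 1 n A); nra.
Qed.

Lemma spec_pos m n A i j : (i < m)%nat -> (j < n)%nat -> A i j <> 0 -> 0 < spec m n A.
Proof.
  intros Hi Hj Hne.
  set (e := fun i' => if Nat.eqb i' j then 1 else 0).
  assert (He : sqnorm n e = 1).
  { unfold sqnorm, dot. transitivity (e j); [apply (sumR_delta n j e); auto |].
    unfold e. now rewrite Nat.eqb_refl. }
  assert (HAe : forall i', matvec m n A e i' = A i' j) by (intros; apply sumR_delta_r; auto).
  pose proof (sqnorm_matvec_le_spec m n A e) as Hb. rewrite He in Hb.
  assert (A i j ^ 2 <= sqnorm m (matvec m n A e)).
  { unfold sqnorm, dot. rewrite (sumR_ext m _ (fun i' => A i' j * A i' j))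
      by (intros; rewrite HAe; reflexivity).
    replace (A i j ^ 2) with (A i j * A i j) by ring.
    apply (sumR_term_le m (fun i' => A i' j * A i' j)); auto. intros; nra. }
  assert (0 < A i j ^ 2) by (rewrite <- Rsqr_pow2; apply Rsqr_pos_lt; auto).
  pose proof (spec_nonneg m n A).
  destruct (Req_dec (spec m n A) 0) as [Z | Z]; [rewrite Z in Hb; lra | lra].
Qed.

Definition aat (A : nat -> nat -> R) r p q := sumR r (fun c => A p c * A q c).
Definition ata (A : nat -> nat -> R) r p q := sumR r (fun e => A e p * A e q).

Lemma sqnorm_trmx_quad a b M w : sqnorm b (matvec b a (trmx M) w) =
  sumR a (fun p => sumR a (fun q => w p * w q * aat M b p q)).
Proof.
  unfold sqnorm, dot, matvec, trmx, aat.
  transitivity (sumR b (fun c => sumR a (fun p => sumR a (fun q => w p * w q * (M p c * M q c))))).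
  { apply sumR_ext; intros c _. rewrite <- !sumR_scalr. apply sumR_ext; intros p _.
    rewrite <- !sumR_scal. apply sumR_ext; intros; ring. }
  rewrite sumR_swap. apply sumR_ext; intros p _. rewrite sumR_swap. apply sumR_ext; intros q _.
  rewrite <- sumR_scal. reflexivity.
Qed.

Lemma sqnorm_matvec_quad a c N w : sqnorm c (matvec c a N w) =
  sumR a (fun p => sumR a (fun q => w p * w q * ata N c p q)).
Proof.
  exact (sqnorm_trmx_quad a c (trmx N) w).
Qed.

Lemma quad_difference_ext a b c M N M' N' :
  (forall p q, (p < a)%nat -> (q < a)%nat ->
     aat M b p q - ata N c p q = aat M' b p q - ata N' c p q) ->
  forall w, sqnorm b (matvec b a (trmx M) w) - sqnorm c (matvec c a N w) =
            sqnorm b (matvec b a (trmx M') w) - sqnorm c (matvec c a N' w).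
Proof.
  intros H w. rewrite !sqnorm_trmx_quad, !sqnorm_matvec_quad, <- !sumR_minus.
  apply sumR_ext; intros p Hp. rewrite <- !sumR_minus. apply sumR_ext; intros q Hq.
  transitivity (w p * w q * (aat M b p q - ata N c p q)); [ring |].
  rewrite H by auto. ring.
Qed.

Definition imbalance b c (M N : nat -> nat -> R) :=
  matsub (matmul b M (trmx M)) (matmul c (trmx N) N).

Lemma dot_imbalance a b c M N w :
  dot a w (matvec a a (imbalance b c M N) w) =
  sqnorm b (matvec b a (trmx M) w) - sqnorm c (matvec c a N w).
Proof.
  rewrite sqnorm_trmx_quad, sqnorm_matvec_quad, <- sumR_minus.
  unfold dot, matvec, imbalance, matsub, matmul, trmx. apply sumR_ext; intros p _.
  rewrite <- sumR_minus, <- sumR_scal. apply sumR_ext; intros q _. unfold aat, ata. ring.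
Qed.

Lemma imbalance_quad_bound a b c M N w :
  let e := spec a a (imbalance b c M N) in
  - (e * sqnorm a w) <= sqnorm b (matvec b a (trmx M) w) - sqnorm c (matvec c a N w)
  <= e * sqnorm a w.
Proof.
  intros e. rewrite <- dot_imbalance. set (G := imbalance b c M N) in *.
  pose proof (dot_Cauchy_Schwarz a w (matvec a a G w)).
  pose proof (sqnorm_matvec_le_spec a a G w).
  pose proof (sqnorm_nonneg a w). pose proof (spec_nonneg a a G).
  pose proof (sqnorm_nonneg a (matvec a a G w)).
  set (g := dot a w (matvec a a G w)) in *.
  assert (g ^ 2 <= (e * sqnorm a w) ^ 2) by (unfold e; nra).
  assert (0 <= e * sqnorm a w) by (unfold e; nra).
  split; nra.
Qed.

Lemma sqnorm_trmx_orth_le m n A u w :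
  sqnorm m u = 1 -> dot m w u = 0 ->
  sqnorm n (matvec n m (trmx A) w) <=
  (frob2 m n A - sqnorm n (matvec n m (trmx A) u)) * sqnorm m w.
Proof.
  intros Hu Hw. set (y := matvec n m (trmx A) u).
  (* remove the rank-one part u y^T of A: it does not see w *)
  set (A' := fun i j => A i j - u i * y j).
  assert (E1 : forall j, matvec n m (trmx A') w j = matvec n m (trmx A) w j).
  { intros j. unfold A', matvec, trmx.
    rewrite (sumR_ext _ _ (fun i => A i j * w i - y j * (w i * u i))) by (intros; ring).
    rewrite sumR_minus, sumR_scal. fold (dot m w u). rewrite Hw. ring. }
  assert (E2 : frob2 m n A' = frob2 m n A - sqnorm n y).
  { unfold frob2, A'.
    rewrite (sumR_ext m _ (fun i => sumR n (fun j => A i j ^ 2)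
       - 2 * sumR n (fun j => u i * A i j * y j) + (u i * u i) * sumR n (fun j => y j * y j))).
    2:{ intros i _. rewrite <- !sumR_scal, <- sumR_minus, <- sumR_plus.
        apply sumR_ext; intros; ring. }
    rewrite sumR_plus, sumR_minus, sumR_scal, sumR_scalr.
    fold (dot m u u) (sqnorm m u). rewrite Hu.
    rewrite (sumR_swap m n (fun i j => u i * A i j * y j)).
    assert (E3 : sumR n (fun j => sumR m (fun i => u i * A i j * y j)) = sqnorm n y).
    { unfold sqnorm, dot. apply sumR_ext; intros j _. rewrite sumR_scalr. f_equal.
      unfold y, matvec, trmx. apply sumR_ext; intros; ring. }
    rewrite E3. unfold sqnorm, dot. ring. }
  rewrite <- (sqnorm_ext n (matvec n m (trmx A') w)) by auto.
  rewrite <- E2. apply sqnorm_trmx_le_frob2.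
Qed.

Lemma sqnorm_trmx_top_sing_le m n A u v x :
  top_sing_pair m n A u v -> sqnorm m x = 1 ->
  let c := dot m x u in
  sqnorm n (matvec n m (trmx A) x) <=
  c ^ 2 * spec m n A ^ 2 + (frob2 m n A - spec m n A ^ 2) * (1 - c ^ 2).
Proof.
  intros [Hu [Hv [HAv HAtu]]] Hx c. apply sqnorm_of_vnorm1 in Hu, Hv.
  set (s := spec m n A) in *.
  set (At := matvec n m (trmx A)).
  (* split x = c u + w with w orthogonal to u *)
  set (w := fun i => x i - c * u i).
  assert (Hwu : dot m w u = 0).
  { unfold w, dot. rewrite (sumR_ext _ _ (fun i => x i * u i - c * (u i * u i))) by (intros; ring).
    rewrite sumR_minus, sumR_scal. fold (dot m x u) (dot m u u) (sqnorm m u). rewrite Hu.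
    unfold c. ring. }
  assert (Hw : sqnorm m w = 1 - c ^ 2).
  { unfold w. rewrite (sqnorm_ext _ _ (fun i => x i + (- c) * u i)) by (intros; lra).
    rewrite sqnorm_plus, sqnorm_scal, dot_sym, dot_scal_l, Hu, Hx, (dot_sym m u x). fold c. ring. }
  assert (Hu_img : sqnorm n (At u) = s ^ 2).
  { rewrite (sqnorm_ext _ _ (fun j => s * v j)) by auto. rewrite sqnorm_scal, Hv. ring. }
  assert (Horth : dot n (fun j => (c * s) * v j) (At w) = 0).
  { rewrite dot_scal_l, dot_sym. unfold At. rewrite <- dot_matvec_trmx.
    rewrite (dot_ext _ w w _ (fun i => s * u i)) by auto.
    rewrite dot_sym, dot_scal_l, dot_sym, Hwu. ring. }
  assert (Hdec : sqnorm n (At x) = c ^ 2 * s ^ 2 + sqnorm n (At w)).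
  { rewrite (sqnorm_ext _ _ (fun j => (c * s) * v j + At w j)).
    - rewrite sqnorm_plus, Horth, sqnorm_scal, Hv. ring.
    - intros j Hj. rewrite Rmult_assoc, <- HAtu by auto. unfold At.
      rewrite <- matvec_scal, <- matvec_plus. apply matvec_ext; intros; unfold w; ring. }
  pose proof (sqnorm_trmx_orth_le m n A u w Hu Hwu) as Hb. fold At in Hb.
  rewrite Hu_img, Hw in Hb. fold s. lra.
Qed.

Lemma sqnorm_trmx_matvec_ge m n A x r :
  r * sqnorm n x <= sqnorm m (matvec m n A x) ->
  r * sqnorm m (matvec m n A x) <= sqnorm n (matvec n m (trmx A) (matvec m n A x)).
Proof.
  intros Hr. set (y := matvec m n A x) in *.
  set (Y := sqnorm n (matvec n m (trmx A) y)).
  assert (Hcs : sqnorm m y ^ 2 <= Y * sqnorm n x).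
  { unfold sqnorm at 1 2. unfold y at 2. rewrite dot_matvec_trmx. apply dot_Cauchy_Schwarz. }
  pose proof (sqnorm_matvec_le_frob2 m n A x). fold y in H.
  pose proof (sqnorm_nonneg n x). pose proof (sqnorm_nonneg m y). pose proof (sqnorm_nonneg n (matvec n m (trmx A) y)).
  fold Y in H2. pose proof (frob2_nonneg m n A).
  destruct (Rle_lt_dec r 0); [nra |].
  destruct (Req_dec (sqnorm n x) 0) as [Z | Z]; [rewrite Z in *; nra |].
  apply (Rmult_le_reg_r (sqnorm n x)); nra.
Qed.

(** * Partial derivatives of the risk *)

(* [upper_row dims W d k] is the single row of W_(k+d) ... W_(k+1) when dims (k+d) = 1. *)
Fixpoint upper_row (dims : nat -> nat) (W : net) (d k : nat) : nat -> R :=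
  match d with
  | O => fun c => if Nat.eqb c 0 then 1 else 0
  | S d' => fun c => sumR (dims (S k)) (fun e => upper_row dims W d' (S k) e * W (S k) e c)
  end.

Lemma upper_row_ext dims W W' d : forall k,
  (forall l e c, (k < l)%nat -> W' l e c = W l e c) ->
  forall c, upper_row dims W' d k c = upper_row dims W d k c.
Proof.
  induction d; intros k H c; simpl; auto.
  apply sumR_ext; intros e _. rewrite IHd, H by (try intros; try apply H; lia). reflexivity.
Qed.

Lemma prodmat_ext dims W W' k :
  (forall l e c, (1 <= l <= k)%nat -> W' l e c = W l e c) ->
  forall i m, prodmat dims W' k i m = prodmat dims W k i m.
Proof.
  induction k; intros H i m; simpl; auto.
  apply sumR_ext; intros q _. rewrite IHk, H by (try intros; try apply H; lia). reflexivity.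
Qed.

Lemma wprod_split dims L W : dims L = 1%nat ->
  forall d k, (k + d = L)%nat -> forall m,
  wprod dims L W m = sumR (dims k) (fun i => upper_row dims W d k i * prodmat dims W k i m).
Proof.
  intros HL d. induction d; intros k Hk m.
  - replace k with L by lia. rewrite HL. simpl. unfold wprod. ring.
  - rewrite (IHd (S k)) by lia. simpl upper_row.
    transitivity (sumR (dims (S k)) (fun e => sumR (dims k) (fun i =>
       upper_row dims W d (S k) e * W (S k) e i * prodmat dims W k i m))).
    { apply sumR_ext; intros e _. simpl prodmat. unfold matmul.
      rewrite <- sumR_scal. apply sumR_ext; intros; ring. }
    rewrite sumR_swap. apply sumR_ext; intros i _. rewrite <- sumR_scalr. reflexivity.
Qed.

Lemma upd_same W k i j x i' j' :
  upd W k i j x k i' j' = W k i' j' +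
    (if Nat.eqb i' i then 1 else 0) * (if Nat.eqb j' j then 1 else 0) * (x - W k i j).
Proof.
  unfold upd. rewrite Nat.eqb_refl. simpl.
  destruct (Nat.eqb_spec i' i); destruct (Nat.eqb_spec j' j); simpl; subst; ring.
Qed.

Lemma upd_other W k i j x l e c : l <> k -> upd W k i j x l e c = W l e c.
Proof. intros. unfold upd. destruct (Nat.eqb_spec l k); [lia | reflexivity]. Qed.

Lemma wprod_upd dims L W k i j x : dims L = 1%nat -> (1 <= k <= L)%nat ->
  (i < dims k)%nat -> (j < dims (k - 1))%nat -> forall m,
  wprod dims L (upd W k i j x) m =
  wprod dims L W m + (x - W k i j) * (upper_row dims W (L - k) k i * prodmat dims W (k - 1) j m).
Proof.
  intros HL Hk Hi Hj m.
  rewrite !(wprod_split dims L _ HL (L - k) k) by lia.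
  destruct k as [| k']; [lia |]. replace (S k' - 1)%nat with k' in * by lia.
  transitivity (sumR (dims (S k')) (fun i0 => upper_row dims W (L - S k') (S k') i0 *
      prodmat dims W (S k') i0 m)
    + sumR (dims (S k')) (fun i0 => (if Nat.eqb i0 i then 1 else 0) *
      (upper_row dims W (L - S k') (S k') i0 * ((x - W (S k') i j) * prodmat dims W k' j m))));
    [| rewrite sumR_delta by auto; ring].
  rewrite <- sumR_plus. apply sumR_ext; intros i0 _. simpl prodmat. unfold matmul.
  rewrite (upper_row_ext dims W (upd W (S k') i j x)) by (intros; apply upd_other; lia).
  transitivity (upper_row dims W (L - S k') (S k') i0 *
    (sumR (dims k') (fun q => W (S k') i0 q * prodmat dims W k' q m)
     + sumR (dims k') (fun q => (if Nat.eqb q j then 1 else 0) *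
         ((if Nat.eqb i0 i then 1 else 0) * (x - W (S k') i j) * prodmat dims W k' q m))));
    [| rewrite sumR_delta by auto; ring].
  rewrite <- sumR_plus. f_equal. apply sumR_ext; intros q _.
  rewrite upd_same, (prodmat_ext dims W (upd W (S k') i j x)) by (intros; apply upd_other; lia).
  ring.
Qed.

(* [risk_grad] is the gradient of the risk as a function of w_prod, and [lower_grad ... k] is
   W_k ... W_1 applied to it; the partial derivative of the risk in (W_k)_(i,j) is the product
   of the i-th entry of [upper_row] and the j-th entry of [lower_grad] at k - 1. *)
Definition risk_grad dims L n (ell' : R -> R) (z : nat -> nat -> R) W m :=
  / INR n * sumR n (fun l => ell' (dot (dims O) (wprod dims L W) (z l)) * z l m).

Definition lower_grad dims L n ell' z W k c :=
  sumR (dims O) (fun m => prodmat dims W k c m * risk_grad dims L n ell' z W m).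

Lemma derivable_pt_lim_sumR n (f : nat -> R -> R) f' x :
  (forall l, (l < n)%nat -> derivable_pt_lim (f l) x (f' l)) ->
  derivable_pt_lim (fun y => sumR n (fun l => f l y)) x (sumR n f').
Proof.
  induction n; intros H; simpl.
  - apply (derivable_pt_lim_const 0).
  - apply (derivable_pt_lim_plus (fun y => sumR n (fun l => f l y)) (f n)).
    + apply IHn; intros; apply H; lia.
    + apply H; lia.
Qed.

Lemma derivable_pt_lim_ell_affine ell ell' s g w0 :
  (forall s, derivable_pt_lim ell s (ell' s)) ->
  derivable_pt_lim (fun x => ell (s + (x - w0) * g)) w0 (ell' s * g).
Proof.
  intros Hell.
  replace (ell' s * g) with (ell' (s + (w0 - w0) * g) * g) by (f_equal; f_equal; ring).
  apply (derivable_pt_lim_comp (fun y => s + (y - w0) * g) ell); [| apply Hell].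
  intros eps He. exists (mkposreal 1 Rlt_0_1). intros h Hh _.
  replace ((s + (w0 + h - w0) * g - (s + (w0 - w0) * g)) / h - g) with 0 by (field; auto).
  rewrite Rabs_R0; auto.
Qed.

Lemma risk_partial_deriv dims L n ell ell' z W k i j :
  dims L = 1%nat -> (forall s, derivable_pt_lim ell s (ell' s)) ->
  (1 <= k <= L)%nat -> (i < dims k)%nat -> (j < dims (k - 1))%nat ->
  derivable_pt_lim (fun x => risk dims L n ell z (upd W k i j x)) (W k i j)
    (upper_row dims W (L - k) k i * lower_grad dims L n ell' z W (k - 1) j).
Proof.
  intros HL Hell Hk Hi Hj.
  set (w0 := W k i j). set (a := upper_row dims W (L - k) k i).
  set (s := fun l => dot (dims O) (wprod dims L W) (z l)).
  set (g := fun l => dot (dims O) (fun m => a * prodmat dims W (k - 1) j m) (z l)).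
  assert (Hrisk : forall x, risk dims L n ell z (upd W k i j x) =
                            / INR n * sumR n (fun l => ell (s l + (x - w0) * g l))).
  { intros x. unfold risk. f_equal. apply sumR_ext; intros l _. f_equal.
    unfold s, g, dot. rewrite <- sumR_scal, <- sumR_plus. apply sumR_ext; intros m _.
    rewrite wprod_upd by auto. fold w0 a. ring. }
  assert (Hgrad : a * lower_grad dims L n ell' z W (k - 1) j =
                  / INR n * sumR n (fun l => ell' (s l) * g l)).
  { symmetry. unfold lower_grad, risk_grad, g, dot. fold s.
    transitivity (/ INR n * sumR n (fun l => sumR (dims O) (fun m =>
      a * prodmat dims W (k - 1) j m * ell' (s l) * z l m))).
    { f_equal. apply sumR_ext; intros l _. rewrite <- sumR_scal. apply sumR_ext; intros; ring. }
    rewrite sumR_swap, <- !sumR_scal. apply sumR_ext; intros m _.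
    rewrite <- !sumR_scal. apply sumR_ext; intros l _. unfold s, dot. ring. }
  rewrite Hgrad.
  apply derivable_pt_lim_ext with (fun x => / INR n * sumR n (fun l => ell (s l + (x - w0) * g l)));
    [intros; symmetry; apply Hrisk |].
  apply derivable_pt_lim_scal, (derivable_pt_lim_sumR n (fun l x => ell (s l + (x - w0) * g l))).
  intros l _. apply derivable_pt_lim_ell_affine, Hell.
Qed.

Fixpoint net_apply (dims : nat -> nat) (W : net) (v : nat -> R) (k : nat) : nat -> R :=
  match k with
  | O => v
  | S k' => matvec (dims (S k')) (dims k') (W (S k')) (net_apply dims W v k')
  end.

Lemma prodmat_net_apply dims W v k : forall i, (i < dims k)%nat ->
  matvec (dims k) (dims O) (prodmat dims W k) v i = net_apply dims W v k i.
Proof.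
  induction k; intros i Hi.
  - unfold matvec. simpl. rewrite <- (sumR_delta (dims O) i v) by auto.
    apply sumR_ext; intros m _. rewrite Nat.eqb_sym. reflexivity.
  - simpl net_apply. unfold matvec at 1. simpl prodmat. unfold matmul.
    rewrite (sumR_ext _ _ (fun m => sumR (dims k) (fun q => W (S k) i q * prodmat dims W k q m * v m)))
      by (intros; rewrite sumR_scalr; reflexivity).
    rewrite sumR_swap. unfold matvec. apply sumR_ext; intros q Hq. rewrite <- IHk by auto.
    unfold matvec. rewrite <- sumR_scal. apply sumR_ext; intros; ring.
Qed.

Lemma dot_wprod dims L W v : dims L = 1%nat ->
  dot (dims O) (wprod dims L W) v = net_apply dims W v L 0%nat.
Proof. intros HL. rewrite <- prodmat_net_apply by lia. reflexivity. Qed.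

Lemma dot_div_l n x y c : dot n (fun i => x i / c) y = dot n x y / c.
Proof. unfold dot, Rdiv. rewrite <- sumR_scalr. apply sumR_ext; intros; ring. Qed.

Lemma sqnorm_dim1 x : sqnorm 1 x = x 0%nat ^ 2.
Proof. unfold sqnorm, dot. simpl. ring. Qed.

Lemma sqnorm_net_apply_le dims W v k :
  sqnorm (dims k) (net_apply dims W v k) <=
  prodR1 k (fun l => frob2 (dims l) (dims (l - 1)%nat) (W l)) * sqnorm (dims O) v.
Proof.
  induction k; simpl; [lra |]. rewrite Nat.sub_0_r.
  pose proof (sqnorm_matvec_le_frob2 (dims (S k)) (dims k) (W (S k)) (net_apply dims W v k)).
  pose proof (frob2_nonneg (dims (S k)) (dims k) (W (S k))).
  pose proof (sqnorm_nonneg (dims k) (net_apply dims W v k)). nra.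
Qed.

Lemma sumR_shift_le m d f : (forall i, 0 <= f i) ->
  sumR d (fun i => f (m + i)%nat) <= sumR (m + d) f.
Proof.
  intros Hf. induction d; simpl.
  - replace (m + 0)%nat with m by lia. apply sumR_nonneg; auto.
  - replace (m + S d)%nat with (S (m + d)) by lia. simpl. lra.
Qed.

Lemma maxR1_ge L f k : (1 <= k <= L)%nat -> f k <= maxR1 L f.
Proof.
  induction L; intros H; [lia |]. simpl.
  destruct (Nat.eq_dec k (S L)) as [-> |]; [apply Rmax_r |].
  eapply Rle_trans; [apply IHL; lia | apply Rmax_l].
Qed.

Lemma maxR1_le L f B : 0 <= B -> (forall k, (1 <= k <= L)%nat -> f k <= B) -> maxR1 L f <= B.
Proof.
  induction L; intros HB H; simpl; auto.
  apply Rmax_lub; [apply IHL; auto; intros; apply H | apply H]; lia.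
Qed.

Lemma maxR1_nonneg L f : 0 <= maxR1 L f.
Proof. induction L; simpl; [lra |]. eapply Rle_trans; [apply IHL | apply Rmax_l]. Qed.

Lemma prodR1_ext L f g : (forall k, (1 <= k <= L)%nat -> f k = g k) -> prodR1 L f = prodR1 L g.
Proof. induction L; intros H; simpl; auto. rewrite IHL, H; auto; try lia. intros; apply H; lia. Qed.

Lemma prodR1_nonneg L f : (forall k, (1 <= k <= L)%nat -> 0 <= f k) -> 0 <= prodR1 L f.
Proof.
  induction L; intros H; simpl; [lra |].
  apply Rmult_le_pos; [apply IHL; intros | apply H]; try apply H; lia.
Qed.

Lemma prodR1_pos L f : (forall k, (1 <= k <= L)%nat -> 0 < f k) -> 0 < prodR1 L f.
Proof.
  induction L; intros H; simpl; [lra |].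
  apply Rmult_lt_0_compat; [apply IHL; intros | apply H]; try apply H; lia.
Qed.

Lemma prodR1_le_pow L f c : (forall k, (1 <= k <= L)%nat -> 0 <= f k <= c) ->
  prodR1 L f <= c ^ L.
Proof.
  induction L; intros H; simpl; [lra |].
  assert (0 <= prodR1 L f) by (apply prodR1_nonneg; intros; apply H; lia).
  assert (prodR1 L f <= c ^ L) by (apply IHL; intros; apply H; lia).
  pose proof (H (S L) ltac:(lia)). nra.
Qed.

Lemma prodR1_sq L f : prodR1 L f ^ 2 = prodR1 L (fun k => f k ^ 2).
Proof. induction L; simpl in *; [ring | rewrite <- IHL; ring]. Qed.

Lemma Bernoulli_ineq n x : 0 <= x <= 1 -> 1 - INR n * x <= (1 - x) ^ n.
Proof.
  induction n; intros H; [simpl; lra |]. pose proof (IHn H). rewrite S_INR. simpl pow.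
  pose proof (pos_INR n).
  assert ((1 - x) * (1 - INR n * x) <= (1 - x) * (1 - x) ^ n) by (apply Rmult_le_compat_l; lra).
  nra.
Qed.

Lemma abs_ratio_bounds (z P a b : R) L : 0 < P -> z ^ 2 <= P ^ 2 ->
  a ^ L <= z ^ 2 -> P ^ 2 <= b ^ L -> 0 <= a <= b -> 0 < b ->
  1 - INR L * ((b - a) / b) <= Rabs z / P <= 1.
Proof.
  intros HP Hz1 Hz2 HP2 Hab Hb.
  set (V := Rabs z / P).
  assert (HV0 : 0 <= V) by (apply Rmult_le_pos; [apply Rabs_pos | left; apply Rinv_0_lt_compat; auto]).
  assert (HV2 : V ^ 2 = z ^ 2 / P ^ 2).
  { unfold V, Rdiv. rewrite Rpow_mult_distr, <- pow_inv, <- (pow2_abs z). reflexivity. }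
  assert (HV1 : V <= 1).
  { assert (V ^ 2 <= 1).
    { rewrite HV2. apply (Rmult_le_reg_r (P ^ 2)); [nra |]. unfold Rdiv.
      rewrite Rmult_assoc, Rinv_l by nra. lra. }
    nra. }
  split; auto.
  assert (Hr : 0 <= a / b <= 1).
  { split; [apply Rmult_le_pos; [lra | left; apply Rinv_0_lt_compat; auto] |].
    apply (Rmult_le_reg_r b); auto. unfold Rdiv. rewrite Rmult_assoc, Rinv_l by lra. lra. }
  replace ((b - a) / b) with (1 - a / b) by (field; lra).
  pose proof (Bernoulli_ineq L (1 - a / b) ltac:(lra)) as Hbern.
  replace (1 - (1 - a / b)) with (a / b) in Hbern by ring.
  assert ((a / b) ^ L <= V ^ 2).
  { rewrite HV2. unfold Rdiv. rewrite Rpow_mult_distr, <- pow_inv.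
    assert (0 < b ^ L) by (apply pow_lt; auto).
    apply Rmult_le_compat; auto; [apply pow_le; lra | apply pow_le; left; apply Rinv_0_lt_compat; auto |].
    rewrite !pow_inv. apply Rinv_le_contravar; nra. }
  nra.
Qed.

Definition layer_spec dims (W : net) k := spec (dims k) (dims (k - 1)%nat) (W k).
Definition layer_frob2 dims (W : net) k := frob2 (dims k) (dims (k - 1)%nat) (W k).
Definition init_imbalance dims (W0 : net) k :=
  spec (dims k) (dims k) (imbalance (dims (k - 1)%nat) (dims (S k)) (W0 k) (W0 (S k))).

Lemma D_init_eq dims L W0 : D_init dims L W0 =
  maxR1 L (layer_frob2 dims W0) - layer_frob2 dims W0 L
  + sumR (L - 1) (fun k0 => init_imbalance dims W0 (S k0)).
Proof. reflexivity. Qed.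

Lemma prodR1_frob_sq dims W L :
  prodR1 L (fun k => frob (dims k) (dims (k - 1)%nat) (W k)) ^ 2 = prodR1 L (layer_frob2 dims W).
Proof.
  rewrite prodR1_sq. apply prodR1_ext. intros k Hk. unfold frob.
  rewrite pow2_sqrt by apply frob2_nonneg. reflexivity.
Qed.

(** * The conservation law of gradient flow *)

Lemma limit1_in_sumR n (f : nat -> R -> R) v D x0 :
  (forall l, (l < n)%nat -> limit1_in (f l) D (v l) x0) ->
  limit1_in (fun s => sumR n (fun l => f l s)) D (sumR n v) x0.
Proof.
  induction n; intros H; simpl.
  - intros eps He. exists 1. split; [lra |]. intros x _. simpl. unfold R_dist.
    rewrite Rminus_0_r, Rabs_R0. auto.
  - apply (limit_plus (fun s => sumR n (fun l => f l s)) (f n)).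
    + apply IHn; intros; apply H; lia.
    + apply H; lia.
Qed.

Lemma const_of_deriv0 f : (forall s, 0 < s -> derivable_pt_lim f s 0) ->
  limit1_in f (fun s => 0 <= s) (f 0) 0 -> forall t, 0 <= t -> f t = f 0.
Proof.
  intros Hd Hl.
  assert (Hc : forall a b, 0 < a -> 0 < b -> f a = f b).
  { assert (K : forall a b, 0 < a -> a < b -> f a = f b).
    { intros a b Ha Hab. destruct (MVT_cor2 f (fun _ => 0) a b Hab) as [c [Hc _]].
      - intros c Hc. apply Hd. lra.
      - lra. }
    intros a b Ha Hb. destruct (Rtotal_order a b) as [h | [h | h]];
      [apply K | subst | symmetry; apply K]; auto. }
  assert (E : f 1 = f 0).
  { destruct (Req_dec (f 1) (f 0)) as [E | E]; auto. exfalso.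
    assert (Hpos : 0 < Rabs (f 1 - f 0)) by (apply Rabs_pos_lt; lra).
    destruct (Hl _ Hpos) as [alp [Ha Ha2]].
    set (x := Rmin (alp / 2) 1).
    assert (0 < x) by (unfold x; apply Rmin_pos; lra).
    assert (x < alp) by (unfold x; pose proof (Rmin_l (alp / 2) 1); lra).
    assert (R_dist (f x) (f 0) < Rabs (f 1 - f 0)).
    { apply Ha2. split; [lra |]. simpl. unfold R_dist. rewrite Rminus_0_r, Rabs_right; lra. }
    unfold R_dist in *. rewrite (Hc x 1) in * by lra. lra. }
  intros t Ht. destruct (Req_dec t 0) as [-> | Hn]; auto. rewrite <- E. apply Hc; lra.
Qed.

Lemma derivable_pt_lim_aat (M : R -> nat -> nat -> R) dM r p q t :
  (forall c, (c < r)%nat -> derivable_pt_lim (fun s => M s p c) t (dM p c)) ->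
  (forall c, (c < r)%nat -> derivable_pt_lim (fun s => M s q c) t (dM q c)) ->
  derivable_pt_lim (fun s => aat (M s) r p q) t
    (sumR r (fun c => dM p c * M t q c + M t p c * dM q c)).
Proof.
  intros Hp Hq. apply (derivable_pt_lim_sumR r (fun c s => M s p c * M s q c)).
  intros c Hc. apply (derivable_pt_lim_mult (fun s => M s p c) (fun s => M s q c)); auto.
Qed.

Lemma derivable_pt_lim_ata (M : R -> nat -> nat -> R) dM r p q t :
  (forall e, (e < r)%nat -> derivable_pt_lim (fun s => M s e p) t (dM e p)) ->
  (forall e, (e < r)%nat -> derivable_pt_lim (fun s => M s e q) t (dM e q)) ->
  derivable_pt_lim (fun s => ata (M s) r p q) t
    (sumR r (fun e => dM e p * M t e q + M t e p * dM e q)).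
Proof.
  intros Hp Hq. apply (derivable_pt_lim_sumR r (fun e s => M s e p * M s e q)).
  intros e He. apply (derivable_pt_lim_mult (fun s => M s e p) (fun s => M s e q)); auto.
Qed.

Section GradientFlow.

Variables (dims : nat -> nat) (L n : nat) (ell ell' : R -> R) (z : nat -> nat -> R)
  (Wt : R -> net).
Hypothesis Hflow : is_gradient_flow dims L n ell z Wt.
Hypothesis Hdims : dims L = 1%nat.
Hypothesis Hell : forall s, derivable_pt_lim ell s (ell' s).

Lemma flow_deriv t k i j : 0 < t ->
  (S k <= L)%nat -> (i < dims (S k))%nat -> (j < dims k)%nat ->
  derivable_pt_lim (fun s => Wt s (S k) i j) t
    (- (upper_row dims (Wt t) (L - S k) (S k) i * lower_grad dims L n ell' z (Wt t) k j)).
Proof.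
  intros Ht Hk Hi Hj.
  assert (Hj' : (j < dims (S k - 1))%nat) by (replace (S k - 1)%nat with k by lia; exact Hj).
  destruct (proj1 Hflow t Ht (S k) i j ltac:(lia) Hi Hj') as [g [Hg1 Hg2]].
  pose proof (risk_partial_deriv dims L n ell ell' z (Wt t) (S k) i j Hdims Hell
                ltac:(lia) Hi Hj') as Hg.
  replace (S k - 1)%nat with k in Hg by lia.
  rewrite (uniqueness_limite _ _ _ _ Hg Hg1). exact Hg2.
Qed.

Lemma lower_grad_S W k q :
  sumR (dims k) (fun c => W (S k) q c * lower_grad dims L n ell' z W k c) =
  lower_grad dims L n ell' z W (S k) q.
Proof.
  unfold lower_grad. simpl prodmat. unfold matmul.
  rewrite (sumR_ext (dims O) _ (fun m => sumR (dims k) (fun c =>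
     W (S k) q c * prodmat dims W k c m * risk_grad dims L n ell' z W m)))
    by (intros; rewrite <- sumR_scalr; apply sumR_ext; intros; ring).
  rewrite sumR_swap. apply sumR_ext; intros c _. rewrite <- sumR_scal.
  apply sumR_ext; intros; ring.
Qed.

Lemma upper_row_S W k q : (k < L)%nat ->
  sumR (dims (S k)) (fun e => upper_row dims W (L - S k) (S k) e * W (S k) e q) =
  upper_row dims W (L - k) k q.
Proof. intros. replace (L - k)%nat with (S (L - S k)) by lia. reflexivity. Qed.

Lemma gram_difference_deriv0 t k p q : 0 < t ->
  (1 <= k < L)%nat -> (p < dims k)%nat -> (q < dims k)%nat ->
  derivable_pt_lim
    (fun s => aat (Wt s k) (dims (k - 1)%nat) p q - ata (Wt s (S k)) (dims (S k)) p q) t 0.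
Proof.
  intros Ht Hk Hp Hq.
  destruct k as [| k]; [lia |]. replace (S k - 1)%nat with k by lia.
  set (A := upper_row dims (Wt t) (L - S k) (S k)).
  set (A1 := upper_row dims (Wt t) (L - S (S k)) (S (S k))).
  set (B0 := lower_grad dims L n ell' z (Wt t) k).
  set (B1 := lower_grad dims L n ell' z (Wt t) (S k)).
  pose proof (derivable_pt_lim_aat (fun s => Wt s (S k)) (fun i c => - (A i * B0 c)) (dims k) p q t
                (fun c Hc => flow_deriv t k p c Ht ltac:(lia) Hp Hc)
                (fun c Hc => flow_deriv t k q c Ht ltac:(lia) Hq Hc)) as H1.
  pose proof (derivable_pt_lim_ata (fun s => Wt s (S (S k))) (fun e c => - (A1 e * B1 c))
                (dims (S (S k))) p q t
                (fun e He => flow_deriv t (S k) e p Ht ltac:(lia) He Hp)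
                (fun e He => flow_deriv t (S k) e q Ht ltac:(lia) He Hq)) as H2.
  (* both derivatives equal - (A p B1 q + A q B1 p) *)
  assert (Ea : forall r, sumR (dims (S (S k))) (fun e => A1 e * Wt t (S (S k)) e r) = A r)
    by (intros; apply upper_row_S; lia).
  assert (Eb : forall r, sumR (dims k) (fun c => Wt t (S k) r c * B0 c) = B1 r)
    by (intros; apply lower_grad_S).
  replace 0 with
    (sumR (dims k) (fun c => - (A p * B0 c) * Wt t (S k) q c + Wt t (S k) p c * - (A q * B0 c))
     - sumR (dims (S (S k))) (fun e => - (A1 e * B1 p) * Wt t (S (S k)) e q
                                       + Wt t (S (S k)) e p * - (A1 e * B1 q))).
  - apply (derivable_pt_lim_minus (fun s => aat (Wt s (S k)) (dims k) p q)
                                  (fun s => ata (Wt s (S (S k))) (dims (S (S k))) p q)); auto.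
  - rewrite (sumR_ext _ _ (fun c => - A p * (Wt t (S k) q c * B0 c)
                                    + - A q * (Wt t (S k) p c * B0 c))) by (intros; ring).
    rewrite (sumR_ext (dims (S (S k))) _ (fun e => - B1 p * (A1 e * Wt t (S (S k)) e q)
                                              + - B1 q * (A1 e * Wt t (S (S k)) e p)))
      by (intros; ring).
    rewrite !sumR_plus, !sumR_scal, !Eb, !Ea. ring.
Qed.

Lemma entry_right_continuous k i j : (1 <= k <= L)%nat -> (i < dims k)%nat ->
  (j < dims (k - 1)%nat)%nat ->
  limit1_in (fun s => Wt s k i j) (fun s => 0 <= s) (Wt 0 k i j) 0.
Proof.
  intros Hk Hi Hj eps He.
  destruct (proj2 Hflow k i j Hk Hi Hj eps He) as [del [Hd Hd2]]. exists del. split; auto.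
  intros x [Hx1 Hx2]. simpl in *. unfold R_dist in *. rewrite Rminus_0_r in Hx2.
  apply Hd2. rewrite Rabs_right in Hx2 by lra. lra.
Qed.

Lemma gram_difference_conserved t k p q : 0 <= t ->
  (1 <= k < L)%nat -> (p < dims k)%nat -> (q < dims k)%nat ->
  aat (Wt t k) (dims (k - 1)%nat) p q - ata (Wt t (S k)) (dims (S k)) p q =
  aat (Wt 0 k) (dims (k - 1)%nat) p q - ata (Wt 0 (S k)) (dims (S k)) p q.
Proof.
  intros Ht Hk Hp Hq.
  apply (const_of_deriv0
    (fun s => aat (Wt s k) (dims (k - 1)%nat) p q - ata (Wt s (S k)) (dims (S k)) p q));
    auto.
  - intros s Hs. apply gram_difference_deriv0; auto.
  - unfold aat, ata. apply limit_minus; apply limit1_in_sumR; intros l Hl;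
      apply limit_mul; apply entry_right_continuous; try lia; auto.
    all: replace (S k - 1)%nat with k by lia; auto.
Qed.

Lemma quad_difference_conserved t k w : 0 <= t -> (1 <= k < L)%nat ->
  sqnorm (dims (k - 1)%nat) (matvec (dims (k - 1)%nat) (dims k) (trmx (Wt t k)) w)
  - sqnorm (dims (S k)) (matvec (dims (S k)) (dims k) (Wt t (S k)) w) =
  sqnorm (dims (k - 1)%nat) (matvec (dims (k - 1)%nat) (dims k) (trmx (Wt 0 k)) w)
  - sqnorm (dims (S k)) (matvec (dims (S k)) (dims k) (Wt 0 (S k)) w).
Proof.
  intros Ht Hk. apply quad_difference_ext. intros p q Hp Hq.
  apply gram_difference_conserved; auto.
Qed.


Let e k := init_imbalance dims (Wt 0) k.
Let E := sumR (L - 1) (fun k0 => e (S k0)).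

Lemma e_nonneg k : 0 <= e k.
Proof. apply spec_nonneg. Qed.

Lemma E_nonneg : 0 <= E.
Proof. apply sumR_nonneg. intros; apply e_nonneg. Qed.

Lemma layer_quad_difference_bound t k w : 0 <= t -> (1 <= k < L)%nat ->
  let d := sqnorm (dims (k - 1)%nat) (matvec (dims (k - 1)%nat) (dims k) (trmx (Wt t k)) w)
           - sqnorm (dims (S k)) (matvec (dims (S k)) (dims k) (Wt t (S k)) w) in
  - (e k * sqnorm (dims k) w) <= d <= e k * sqnorm (dims k) w.
Proof. intros Ht Hk d. unfold d. rewrite quad_difference_conserved by auto. apply imbalance_quad_bound. Qed.

Lemma sqnorm_next_layer_le t k w : 0 <= t -> (1 <= k < L)%nat ->
  sqnorm (dims (S k)) (matvec (dims (S k)) (dims k) (Wt t (S k)) w) <=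
  sqnorm (dims (k - 1)%nat) (matvec (dims (k - 1)%nat) (dims k) (trmx (Wt t k)) w)
  + spec (dims (S k)) (dims k) (Wt 0 (S k)) ^ 2 * sqnorm (dims k) w.
Proof.
  intros Ht Hk. pose proof (quad_difference_conserved t k w Ht Hk).
  pose proof (sqnorm_matvec_le_spec (dims (S k)) (dims k) (Wt 0 (S k)) w).
  pose proof (sqnorm_nonneg (dims (k - 1)%nat) (matvec (dims (k - 1)%nat) (dims k) (trmx (Wt 0 k)) w)).
  lra.
Qed.

Lemma sqnorm_trmx_layer_le t k w : 0 <= t -> (1 <= k < L)%nat ->
  sqnorm (dims (k - 1)%nat) (matvec (dims (k - 1)%nat) (dims k) (trmx (Wt t k)) w) <=
  sqnorm (dims (S k)) (matvec (dims (S k)) (dims k) (Wt t (S k)) w)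
  + spec (dims k) (dims (k - 1)%nat) (Wt 0 k) ^ 2 * sqnorm (dims k) w.
Proof.
  intros Ht Hk. pose proof (quad_difference_conserved t k w Ht Hk).
  pose proof (sqnorm_trmx_le_spec (dims k) (dims (k - 1)%nat) (Wt 0 k) w).
  pose proof (sqnorm_nonneg (dims (S k)) (matvec (dims (S k)) (dims k) (Wt 0 (S k)) w)).
  lra.
Qed.

Lemma layer_frob2_diff_conserved t k : 0 <= t -> (1 <= k < L)%nat ->
  layer_frob2 dims (Wt t) k - layer_frob2 dims (Wt t) (S k) =
  layer_frob2 dims (Wt 0) k - layer_frob2 dims (Wt 0) (S k).
Proof.
  intros Ht Hk.
  assert (Etr : forall W : net, layer_frob2 dims W k - layer_frob2 dims W (S k) =
     sumR (dims k) (fun p => aat (W k) (dims (k - 1)%nat) p p - ata (W (S k)) (dims (S k)) p p)).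
  { intros W. unfold layer_frob2, frob2, aat, ata. replace (S k - 1)%nat with k by lia.
    rewrite sumR_minus, (sumR_swap (dims (S k))). f_equal; apply sumR_ext; intros;
      apply sumR_ext; intros; ring. }
  rewrite !Etr. apply sumR_ext; intros p Hp. apply gram_difference_conserved; auto.
Qed.

Lemma layer_frob2_diff_last_conserved t k : 0 <= t -> (1 <= k <= L)%nat ->
  layer_frob2 dims (Wt t) k - layer_frob2 dims (Wt t) L =
  layer_frob2 dims (Wt 0) k - layer_frob2 dims (Wt 0) L.
Proof.
  intros Ht Hk.
  assert (Hchain : forall d, (k + d <= L)%nat ->
    layer_frob2 dims (Wt t) k - layer_frob2 dims (Wt t) (k + d) =
    layer_frob2 dims (Wt 0) k - layer_frob2 dims (Wt 0) (k + d)).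
  { induction d as [| d IH]; intros Hd; [rewrite Nat.add_0_r; ring |].
    pose proof (IH ltac:(lia)). pose proof (layer_frob2_diff_conserved t (k + d) Ht ltac:(lia)).
    replace (k + S d)%nat with (S (k + d)) by lia. lra. }
  pose proof (Hchain (L - k)%nat ltac:(lia)). replace (k + (L - k))%nat with L in H by lia.
  exact H.
Qed.

Lemma layer_spec_sq_succ_le t k : 0 <= t -> (1 <= k < L)%nat ->
  layer_spec dims (Wt t) (S k) ^ 2 <= layer_spec dims (Wt t) k ^ 2 + e k.
Proof.
  intros Ht Hk. unfold layer_spec. replace (S k - 1)%nat with k by lia.
  set (s := spec (dims k) (dims (k - 1)%nat) (Wt t k)).
  pose proof (spec_nonneg (dims k) (dims (k - 1)%nat) (Wt t k)). pose proof (e_nonneg k).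
  assert (Hb : 0 <= s ^ 2 + e k) by nra.
  assert (spec (dims (S k)) (dims k) (Wt t (S k)) <= sqrt (s ^ 2 + e k)).
  { apply spec_le; [apply sqrt_pos |]. intros x Hx. rewrite pow2_sqrt by auto.
    pose proof (layer_quad_difference_bound t k x Ht Hk).
    pose proof (sqnorm_trmx_le_spec (dims k) (dims (k - 1)%nat) (Wt t k) x).
    pose proof (sqnorm_nonneg (dims k) x). fold s in H2. nra. }
  pose proof (spec_nonneg (dims (S k)) (dims k) (Wt t (S k))).
  pose proof (sqrt_sqrt _ Hb). nra.
Qed.

Lemma layer_spec_sq_last_le t k : 0 <= t -> (1 <= k <= L)%nat ->
  layer_spec dims (Wt t) L ^ 2 <= layer_spec dims (Wt t) k ^ 2 + E.
Proof.
  intros Ht Hk.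
  assert (Hchain : forall d, (k + d <= L)%nat ->
    layer_spec dims (Wt t) (k + d) ^ 2 <= layer_spec dims (Wt t) k ^ 2 + sumR d (fun i => e (k + i))).
  { induction d as [| d IH]; intros Hd; simpl; [rewrite Nat.add_0_r; lra |].
    pose proof (IH ltac:(lia)). pose proof (layer_spec_sq_succ_le t (k + d) Ht ltac:(lia)).
    replace (k + S d)%nat with (S (k + d)) by lia. lra. }
  pose proof (Hchain (L - k)%nat ltac:(lia)). replace (k + (L - k))%nat with L in H by lia.
  pose proof (sumR_shift_le (k - 1) (L - k) (fun k0 => e (S k0)) (fun i => e_nonneg (S i))).
  replace (k - 1 + (L - k))%nat with (L - 1)%nat in H0 by lia.
  rewrite (sumR_ext _ (fun i => e (S (k - 1 + i))) (fun i => e (k + i)%nat)) in H0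
    by (intros; f_equal; lia).
  unfold E. lra.
Qed.

Lemma layer_spec_last_sq t : layer_spec dims (Wt t) L ^ 2 = layer_frob2 dims (Wt t) L.
Proof. unfold layer_spec, layer_frob2. rewrite Hdims. apply spec_row. Qed.

Lemma frob2_sub_spec_sq_le t k : 0 <= t -> (1 <= k <= L)%nat ->
  layer_frob2 dims (Wt t) k - layer_spec dims (Wt t) k ^ 2 <= D_init dims L (Wt 0).
Proof.
  intros Ht Hk. rewrite D_init_eq.
  change (sumR (L - 1) (fun k0 => init_imbalance dims (Wt 0) (S k0))) with E.
  pose proof (layer_spec_sq_last_le t k Ht Hk). rewrite layer_spec_last_sq in H.
  pose proof (layer_frob2_diff_last_conserved t k Ht Hk).
  pose proof (maxR1_ge L (layer_frob2 dims (Wt 0)) k Hk). lra.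
Qed.

Lemma D_init_nonneg : (1 <= L)%nat -> 0 <= D_init dims L (Wt 0).
Proof.
  intros HL1. pose proof (frob2_sub_spec_sq_le 0 L (Rle_refl 0) ltac:(lia)).
  pose proof (layer_spec_last_sq 0). lra.
Qed.

(** * Alignment of consecutive layers *)

Lemma top_sing_alignment t k uk vk uk1 vk1 : 0 <= t -> (1 <= k < L)%nat ->
  top_sing_pair (dims k) (dims (k - 1)%nat) (Wt t k) uk vk ->
  top_sing_pair (dims (S k)) (dims k) (Wt t (S k)) uk1 vk1 ->
  spec (dims (S k)) (dims k) (Wt t (S k)) ^ 2 * (1 - dot (dims k) vk1 uk ^ 2) <=
  D_init dims L (Wt 0) + spec (dims (S k)) (dims k) (Wt 0 (S k)) ^ 2
  + spec (dims k) (dims (k - 1)%nat) (Wt 0 k) ^ 2.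
Proof.
  intros Ht Hk Hsk Hsk1. pose proof Hsk as [Hu [Hv [_ HMtu]]].
  pose proof Hsk1 as [Hu1 [Hv1 [HNv _]]]. apply sqnorm_of_vnorm1 in Hu, Hv, Hu1, Hv1.
  set (s := spec (dims k) (dims (k - 1)%nat) (Wt t k)).
  set (s1 := spec (dims (S k)) (dims k) (Wt t (S k))).
  set (c := dot (dims k) vk1 uk).
  assert (Hs1 : sqnorm (dims (S k)) (matvec (dims (S k)) (dims k) (Wt t (S k)) vk1) = s1 ^ 2).
  { rewrite (sqnorm_ext _ _ (fun i => s1 * uk1 i)) by auto. rewrite sqnorm_scal, Hu1. ring. }
  assert (Hs : sqnorm (dims (k - 1)%nat) (matvec (dims (k - 1)%nat) (dims k) (trmx (Wt t k)) uk)
               = s ^ 2).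
  { rewrite (sqnorm_ext _ _ (fun j => s * vk j)) by auto. rewrite sqnorm_scal, Hv. ring. }
  pose proof (sqnorm_next_layer_le t k vk1 Ht Hk) as Hnext. rewrite Hs1, Hv1 in Hnext.
  pose proof (sqnorm_trmx_layer_le t k uk Ht Hk) as Hprev. rewrite Hs, Hu in Hprev.
  pose proof (sqnorm_matvec_le_spec (dims (S k)) (dims k) (Wt t (S k)) uk) as Hs1b.
  rewrite Hu in Hs1b. fold s1 in Hs1b.
  pose proof (sqnorm_trmx_top_sing_le _ _ _ _ _ vk1 Hsk Hv1) as Htop. fold s c in Htop.
  pose proof (frob2_sub_spec_sq_le t k Ht ltac:(lia)) as Hi. unfold layer_frob2, layer_spec in Hi.
  fold s in Hi.
  pose proof (D_init_nonneg ltac:(lia)).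
  assert (Hc : c ^ 2 <= 1).
  { pose proof (dot_Cauchy_Schwarz (dims k) vk1 uk). fold c in H0. rewrite Hv1, Hu in H0. lra. }
  pose proof (pow2_ge_0 c). pose proof (pow2_ge_0 (spec (dims k) (dims (k - 1)%nat) (Wt 0 k))).
  set (g := frob2 (dims k) (dims (k - 1)%nat) (Wt t k) - s ^ 2) in *.
  assert (g * (1 - c ^ 2) <= D_init dims L (Wt 0) * (1 - c ^ 2)) by nra.
  assert (c ^ 2 * s ^ 2 <= c ^ 2 * (s1 ^ 2 + spec (dims k) (dims (k - 1)%nat) (Wt 0 k) ^ 2))
    by (apply Rmult_le_compat_l; lra).
  nra.
Qed.

Lemma top_sing_alignment_ge t k uk vk uk1 vk1 : 0 <= t -> (1 <= k < L)%nat ->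
  (exists i j, (i < dims (S k))%nat /\ (j < dims k)%nat /\ Wt t (S k) i j <> 0) ->
  top_sing_pair (dims k) (dims (k - 1)%nat) (Wt t k) uk vk ->
  top_sing_pair (dims (S k)) (dims k) (Wt t (S k)) uk1 vk1 ->
  dot (dims k) vk1 uk ^ 2 >=
    1 - (D_init dims L (Wt 0) + spec (dims (S k)) (dims k) (Wt 0 (S k)) ^ 2
         + spec (dims k) (dims (k - 1)%nat) (Wt 0 k) ^ 2)
        / spec (dims (S k)) (dims k) (Wt t (S k)) ^ 2.
Proof.
  intros Ht Hk [i [j [Hi [Hj Hne]]]] Hsk Hsk1.
  pose proof (top_sing_alignment t k uk vk uk1 vk1 Ht Hk Hsk Hsk1) as H.
  set (s2 := spec (dims (S k)) (dims k) (Wt t (S k)) ^ 2) in *.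
  set (c := dot (dims k) vk1 uk) in *.
  set (X := D_init dims L (Wt 0) + _ + _) in *.
  assert (Hs : 0 < s2) by (apply pow_lt, (spec_pos _ _ _ i j); auto).
  assert (Hdiv : X / s2 - (1 - c ^ 2) = (X - s2 * (1 - c ^ 2)) / s2) by (field; lra).
  assert (0 <= (X - s2 * (1 - c ^ 2)) / s2) by (apply Rmult_le_pos; [lra | left; apply Rinv_0_lt_compat; lra]).
  lra.
Qed.

(** * Alignment of the first layer with w_prod *)

Lemma sqnorm_next_layer_ge t k w r : 0 <= t -> (S k < L)%nat ->
  r * sqnorm (dims (S k)) w <=
    sqnorm (dims k) (matvec (dims k) (dims (S k)) (trmx (Wt t (S k))) w) ->
  (r - e (S k)) * sqnorm (dims (S k)) w <=
    sqnorm (dims (S (S k))) (matvec (dims (S (S k))) (dims (S k)) (Wt t (S (S k))) w).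
Proof.
  intros Ht Hk Hr. pose proof (layer_quad_difference_bound t (S k) w Ht ltac:(lia)) as Hb.
  replace (S k - 1)%nat with k in Hb by lia. lra.
Qed.

Section TopSingularDirection.

Variables (t : R) (u v : nat -> R).
Hypothesis Ht : 0 <= t.
Hypothesis Huv : top_sing_pair (dims 1%nat) (dims O) (Wt t 1%nat) u v.

Let zk k := net_apply dims (Wt t) v k.
Let rate k := layer_spec dims (Wt t) 1%nat ^ 2 - sumR k (fun i => e (S i)).

Lemma sqnorm_net_apply_1 : sqnorm (dims 1%nat) (zk 1%nat) = layer_spec dims (Wt t) 1%nat ^ 2.
Proof.
  destruct Huv as [Hu [_ [Hmv _]]]. apply sqnorm_of_vnorm1 in Hu.
  rewrite (sqnorm_ext _ _ (fun i => layer_spec dims (Wt t) 1%nat * u i)) by (intros; apply Hmv; auto).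
  rewrite sqnorm_scal, Hu. ring.
Qed.

Lemma trmx_net_apply_ge k : (k < L)%nat ->
  rate k * sqnorm (dims (S k)) (zk (S k)) <=
  sqnorm (dims k) (matvec (dims k) (dims (S k)) (trmx (Wt t (S k))) (zk (S k))).
Proof.
  induction k as [| k IH]; intros Hk.
  - destruct Huv as [_ [Hv [Hmv Hmtv]]]. apply sqnorm_of_vnorm1 in Hv.
    unfold rate. simpl sumR. rewrite Rminus_0_r, sqnorm_net_apply_1.
    set (s := layer_spec dims (Wt t) 1%nat).
    rewrite (sqnorm_ext (dims O) _ (fun j => (s * s) * v j)); [rewrite sqnorm_scal, Hv; lra |].
    intros j Hj. unfold zk. simpl net_apply.
    rewrite (matvec_ext _ _ _ _ (fun i => s * u i)) by (intros; apply Hmv; auto).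
    rewrite matvec_scal, Hmtv by auto. unfold s, layer_spec. simpl. ring.
  - pose proof (IH ltac:(lia)) as IHk.
    pose proof (sqnorm_next_layer_ge t k _ _ Ht Hk IHk) as Hstep.
    replace (rate k - e (S k)) with (rate (S k)) in Hstep by (unfold rate; simpl; ring).
    apply sqnorm_trmx_matvec_ge. exact Hstep.
Qed.

Lemma net_apply_growth k : (k < L)%nat ->
  0 <= rate (L - 1) -> rate (L - 1) ^ S k <= sqnorm (dims (S k)) (zk (S k)).
Proof.
  set (a := rate (L - 1)). intros Hk Ha.
  assert (Hrate : forall j, (j <= L - 1)%nat -> a <= rate j).
  { intros j Hj. unfold a, rate.
    pose proof (sumR_le_n j (L - 1) (fun i => e (S i)) Hj (fun i => e_nonneg (S i))). lra. }
  induction k as [| k IH].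
  - rewrite sqnorm_net_apply_1. pose proof (Hrate 0%nat ltac:(lia)). unfold rate in H.
    simpl in *. lra.
  - pose proof (IH ltac:(lia)) as IHk.
    pose proof (trmx_net_apply_ge k ltac:(lia)) as Hk1.
    pose proof (sqnorm_next_layer_ge t k _ _ Ht Hk Hk1) as Hstep.
    replace (rate k - e (S k)) with (rate (S k)) in Hstep by (unfold rate; simpl; ring).
    pose proof (Hrate (S k) ltac:(lia)). pose proof (pow_le a (S k) Ha).
    pose proof (sqnorm_nonneg (dims (S k)) (zk (S k))).
    change (a ^ S (S k)) with (a * a ^ S k).
    assert (Hab : a * a ^ S k <= rate (S k) * sqnorm (dims (S k)) (zk (S k))) by nra.
    exact (Rle_trans _ _ _ Hab Hstep).
Qed.

End TopSingularDirection.

Let K := maxR1 L (fun k => Rabs (layer_frob2 dims (Wt 0) k - layer_frob2 dims (Wt 0) L)).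
Let Q := K + D_init dims L (Wt 0) + E.

Lemma layer_frob2_near_last t k : 0 <= t -> (1 <= k <= L)%nat ->
  layer_frob2 dims (Wt t) L - K <= layer_frob2 dims (Wt t) k <= layer_frob2 dims (Wt t) L + K.
Proof.
  intros Ht Hk.
  pose proof (maxR1_ge L (fun k => Rabs (layer_frob2 dims (Wt 0) k - layer_frob2 dims (Wt 0) L))
                k Hk) as Hb.
  cbv beta in Hb. rewrite <- (layer_frob2_diff_last_conserved t k) in Hb by auto. fold K in Hb.
  unfold Rabs in Hb. destruct (Rcase_abs _) in Hb; lra.
Qed.

Lemma wprod_alignment_bounds t u v : 0 <= t -> (1 <= L)%nat ->
  top_sing_pair (dims 1%nat) (dims O) (Wt t 1%nat) u v ->
  let F := layer_frob2 dims (Wt t) L in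
  Q + 1 <= F ->
  1 - INR L * ((Q + K) / (F + K)) <=
  Rabs (dot (dims O) (fun j => wprod dims L (Wt t) j
                               / prodR1 L (fun k => frob (dims k) (dims (k - 1)%nat) (Wt t k))) v)
  <= 1.
Proof.
  intros Ht HL1 Huv F HF.
  assert (HD : 0 <= D_init dims L (Wt 0)) by (apply D_init_nonneg; lia).
  pose proof E_nonneg. assert (HK : 0 <= K) by apply maxR1_nonneg.
  pose proof (layer_frob2_near_last t) as Hnear. fold F in Hnear.
  set (P := prodR1 L (fun k => frob (dims k) (dims (k - 1)%nat) (Wt t k))).
  assert (HP : 0 < P).
  { apply prodR1_pos. intros k Hk. apply sqrt_lt_R0. pose proof (Hnear k Ht Hk).
    unfold layer_frob2 in H0. unfold Q in HF. lra. }
  assert (HP2 : P ^ 2 = prodR1 L (layer_frob2 dims (Wt t))) by apply prodR1_frob_sq.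
  rewrite dot_div_l, dot_wprod by auto. set (zz := net_apply dims (Wt t) v L 0%nat).
  unfold Rdiv. rewrite Rabs_mult, Rabs_inv, (Rabs_right P) by lra.
  assert (Hv : sqnorm (dims O) v = 1) by (apply sqnorm_of_vnorm1, Huv).
  assert (Hzz : zz ^ 2 = sqnorm (dims L) (net_apply dims (Wt t) v L))
    by (rewrite Hdims, sqnorm_dim1; reflexivity).
  assert (Hup : zz ^ 2 <= P ^ 2).
  { rewrite Hzz, HP2. pose proof (sqnorm_net_apply_le dims (Wt t) v L). rewrite Hv in H0.
    unfold layer_frob2. lra. }
  assert (Ha : F - Q <= layer_spec dims (Wt t) 1%nat ^ 2 - E).
  { pose proof (frob2_sub_spec_sq_le t 1%nat Ht ltac:(lia)).
    pose proof (Hnear 1%nat Ht ltac:(lia)). unfold Q. lra. }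
  assert (Hlow : (F - Q) ^ L <= zz ^ 2).
  { rewrite Hzz. eapply Rle_trans; [apply pow_incr; split; [lra | exact Ha] |].
    pose proof (net_apply_growth t u v Ht Huv (L - 1) ltac:(lia)) as Hg.
    replace (S (L - 1)) with L in Hg by lia. apply Hg. fold E. lra. }
  assert (HPup : P ^ 2 <= (F + K) ^ L).
  { rewrite HP2. apply prodR1_le_pow. intros k Hk. split; [apply frob2_nonneg | apply Hnear; auto]. }
  pose proof (abs_ratio_bounds zz P (F - Q) (F + K) L HP Hup Hlow HPup) as Hb.
  replace (F + K - (F - Q)) with (Q + K) in Hb by ring. apply Hb; unfold Q in *; lra.
Qed.

Lemma layer_frob2_last_large :
  tends_to_infty (fun t => maxR1 L (fun k => frob (dims k) (dims (k - 1)%nat) (Wt t k))) ->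
  forall M, exists T, forall t, T <= t -> 0 <= t /\ M <= layer_frob2 dims (Wt t) L.
Proof.
  intros Hinf M. set (M' := Rmax M 0).
  assert (HM' : M <= M' /\ 0 <= M') by (split; [apply Rmax_l | apply Rmax_r]).
  assert (HK : 0 <= K) by apply maxR1_nonneg.
  destruct (Hinf (sqrt (M' + K))) as [T HT]. exists (Rmax T 0). intros t Ht.
  assert (Ht0 : 0 <= t) by (pose proof (Rmax_r T 0); lra).
  assert (HTt : T <= t) by (pose proof (Rmax_l T 0); lra).
  split; auto.
  assert (Hsq : sqrt (M' + K) <= sqrt (layer_frob2 dims (Wt t) L + K)).
  { eapply Rle_trans; [exact (HT t HTt) |].
    apply maxR1_le; [apply sqrt_pos |]. intros k Hk. apply sqrt_le_1_alt.
    pose proof (layer_frob2_near_last t k Ht0 Hk). unfold layer_frob2 in *. lra. }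
  pose proof (frob2_nonneg (dims L) (dims (L - 1)%nat) (Wt t L)).
  apply sqrt_le_0 in Hsq; unfold layer_frob2 in *; lra.
Qed.

Lemma wprod_alignment_tends_to (u1 v1 : R -> nat -> R) : (1 <= L)%nat ->
  (forall t, 0 <= t -> top_sing_pair (dims 1%nat) (dims O) (Wt t 1%nat) (u1 t) (v1 t)) ->
  tends_to_infty (fun t => maxR1 L (fun k => frob (dims k) (dims (k - 1)%nat) (Wt t k))) ->
  tends_to (fun t => Rabs (dot (dims O)
               (fun j => wprod dims L (Wt t) j
                         / prodR1 L (fun k => frob (dims k) (dims (k - 1)%nat) (Wt t k)))
               (v1 t))) 1.
Proof.
  intros HL1 Hsing Hinf eps Heps.
  assert (HK : 0 <= K) by apply maxR1_nonneg.
  assert (HQK : 0 <= Q + K)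
    by (pose proof (D_init_nonneg HL1); pose proof E_nonneg; unfold Q; lra).
  (* beyond this size of the last layer, L (Q + K) / (F + K) < eps *)
  set (M := Q + 1 + INR L * (Q + K) / eps).
  assert (HM : 0 <= INR L * (Q + K) / eps).
  { apply Rmult_le_pos; [apply Rmult_le_pos; [apply pos_INR | lra] | left; apply Rinv_0_lt_compat; lra]. }
  destruct (layer_frob2_last_large Hinf M) as [T HT]. exists T. intros t Ht.
  destruct (HT t Ht) as [Ht0 HF].
  assert (HQF : Q + 1 <= layer_frob2 dims (Wt t) L) by (unfold M in HF; lra).
  pose proof (wprod_alignment_bounds t (u1 t) (v1 t) Ht0 HL1 (Hsing t Ht0) HQF) as Hb.
  set (F := layer_frob2 dims (Wt t) L) in *.
  assert (Hlt : INR L * (Q + K) / eps < F + K) by (unfold M in HF; lra).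
  assert (Hsmall : INR L * ((Q + K) / (F + K)) < eps).
  { apply Rmult_lt_reg_r with (F + K); [lra |].
    replace (INR L * ((Q + K) / (F + K)) * (F + K)) with (eps * (INR L * (Q + K) / eps))
      by (field; lra).
    apply Rmult_lt_compat_l; lra. }
  rewrite Rabs_left1 by lra. lra.
Qed.

End GradientFlow.

Theorem mainTheorem3
  (L : nat) (dims : nat -> nat) (n : nat)
  (x : nat -> nat -> R) (y : nat -> R) (ell ell' : R -> R) (Wt : R -> net) :
  (2 <= L)%nat ->
  dims L = 1%nat ->
  (forall i, (i < n)%nat -> vnorm (dims O) (x i) <= 1) ->
  (forall i, (i < n)%nat -> y i = 1 \/ y i = -1) ->
  (forall s, derivable_pt_lim ell s (ell' s)) ->
  continuity ell' ->
  is_gradient_flow dims L n ell (fun i j => y i * x i j) Wt ->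
  let D := D_init dims L (Wt 0) in
  (* (i) *)
  (forall t, 0 <= t -> forall k, (1 <= k <= L)%nat ->
     frob2 (dims k) (dims (k - 1)%nat) (Wt t k)
       - (spec (dims k) (dims (k - 1)%nat) (Wt t k)) ^ 2 <= D) /\
  (* (ii) *)
  (forall t, 0 <= t -> forall k, (1 <= k < L)%nat ->
     (exists i j, (i < dims (S k))%nat /\ (j < dims k)%nat /\ Wt t (S k) i j <> 0) ->
     forall uk vk uk1 vk1,
       top_sing_pair (dims k) (dims (k - 1)%nat) (Wt t k) uk vk ->
       top_sing_pair (dims (S k)) (dims k) (Wt t (S k)) uk1 vk1 ->
       (dot (dims k) vk1 uk) ^ 2 >=
         1 - (D + (spec (dims (S k)) (dims k) (Wt 0 (S k))) ^ 2
                + (spec (dims k) (dims (k - 1)%nat) (Wt 0 k)) ^ 2)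
             / (spec (dims (S k)) (dims k) (Wt t (S k))) ^ 2) /\
  (* (iii) *)
  (forall u1 v1 : R -> nat -> R,
     (forall t, 0 <= t -> top_sing_pair (dims 1%nat) (dims O) (Wt t 1%nat) (u1 t) (v1 t)) ->
     tends_to_infty (fun t => maxR1 L (fun k => frob (dims k) (dims (k - 1)%nat) (Wt t k))) ->
     tends_to (fun t => Rabs (dot (dims O)
                  (fun j => wprod dims L (Wt t) j
                            / prodR1 L (fun k => frob (dims k) (dims (k - 1)%nat) (Wt t k)))
                  (v1 t))) 1).
Proof.
  intros HL2 Hdims _ _ Hell _ Hflow D. split; [| split].
  - intros t Ht k Hk. exact (frob2_sub_spec_sq_le _ _ _ _ _ _ _ Hflow Hdims Hell t k Ht Hk).
  - intros t Ht k Hk Hne uk vk uk1 vk1.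
    exact (top_sing_alignment_ge _ _ _ _ _ _ _ Hflow Hdims Hell t k uk vk uk1 vk1 Ht Hk Hne).
  - intros u1 v1.
    exact (wprod_alignment_tends_to _ _ _ _ _ _ _ Hflow Hdims Hell u1 v1 ltac:(lia)).
Qed.
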